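(* Let $T$ be a measure-preserving map on the probability space $(X,\mathcal{A},\mu)$, $(A_l)$ a sequence of asymptotically rare events, $(\nu_l)$ a sequence in $\mathfrak{P}$, and $\tau_l:X\to\mathbb{N}_0$, $l\ge1$, measurable functions. a) $(\tau_l)$ is an admissible delay sequence for the variables $R_l:=\mu(A_l)\Phi_{A_l}:X\to[0,\infty]^{\mathbb{N}_0}$ and the measures $\nu_l$ provided that $\mu(A_l)\tau_l\to0$ in $\nu_l$-probability and $\nu_l(\tau_l<\varphi_{A_l})\to1$ as $l\to\infty$. b) The condition $\nu_l(\tau_l<\varphi_{A_l})\to1$ alone suffices for $(\tau_l)$ to be an admissible delay sequence for the variables $R_l:=\mu(A_l)\Phi_{A_l}\circ T_{A_l}:X\to[0,\infty]^{\mathbb{N}}$ and the $\nu_l$.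
   Context: For $A$ with $\mu(A)>0$: $\varphi_A(x):=\inf\{n\ge1:T^nx\in A\}$, $T_Ax:=T^{\varphi_A(x)}x$, $\Phi_A:=(\varphi_A,\varphi_A\circ T_A,\ldots)$; $[0,\infty]$ metrized by $|e^{-s}-e^{-t}|$, sequence spaces with the product metric $\sum_j2^{-(j+1)}d(s^{(j)},t^{(j)})$. Asymptotically rare: $0<\mu(A_l)\to0$. $\mathfrak{P}$: probabilities $\nu\ll\mu$. $T^\tau x:=T^{\tau(x)}x$. For Borel maps $R_l$ into a compact metric space $\mathfrak{E}$ and probabilities $\nu_l$, $(\tau_l)$ is an admissible delay sequence for $(R_l)$ and $(\nu_l)$ if $D_{\mathfrak{E}}(\nu_l\circ R_l^{-1},\nu_l\circ(R_l\circ T^{\tau_l})^{-1})\to0$, where $D_{\mathfrak{E}}(Q,Q')=\sum_{j\ge1}2^{-(j+1)}|\int\chi_j\,dQ-\int\chi_j\,dQ'|$ for a fixed sequence of Lipschitz $\chi_j$, $|\chi_j|\le1$, obtained by normalizing a dense sequence in $\mathcal{C}(\mathfrak{E})$ (a metric for weak convergence). *)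

From HB Require Import structures.
From mathcomp Require Import all_boot all_order all_algebra.
From mathcomp Require Import all_classical all_reals all_analysis.
Set Implicit Arguments. Unset Strict Implicit. Unset Printing Implicit Defensive.
Import Order.TTheory GRing.Theory Num.Theory.
Import numFieldNormedType.Exports.
Local Open Scope classical_set_scope.
Local Open Scope ring_scope.

Section defs.
Context {R : realType} {X : Type}.

Definition measure_preserving {d} {X' : measurableType d}
  (mu : set X' -> \bar R) (T : X' -> X') :=
  measurable_fun setT T /\
  forall B, measurable B -> mu (T @^-1` B) = mu B.

Definition asymptotically_rare {d} {X' : measurableType d}
  (mu : set X' -> \bar R) (A : nat -> set X') :=
  (forall l, measurable (A l)) /\ (forall l, (0 < mu (A l))%E) /\
  (mu \o A @ \oo --> 0%E).

Definition phi (T : X -> X) (A : set X) (x : X) : \bar R :=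
  ereal_inf [set (n%:R)%:E | n in [set n : nat | (0 < n)%N /\ A (iter n T x)]].

(* the (nat-valued) hitting time; convention 0 when A is never hit *)
Definition hit_time (T : X -> X) (A : set X) (x : X) : nat :=
  xget 0%N [set n : nat | [/\ (0 < n)%N, A (iter n T x) &
     forall m, (0 < m)%N -> A (iter m T x) -> (n <= m)%N]].

(* induced map T_A x = T^{phi_A x} x  (= x if phi_A x = oo) *)
Definition TA (T : X -> X) (A : set X) (x : X) : X := iter (hit_time T A x) T x.

Definition Phi (T : X -> X) (A : set X) (x : X) : nat -> \bar R :=
  fun k => phi T A (iter k (TA T A) x).

Definition Tdelay (T : X -> X) (tau : X -> nat) (x : X) : X := iter (tau x) T x.

End defs.

(* The compact metric space E = [0,oo]^N_0 with the metric
   d(s,t) = sum_j 2^{-(j+1)} |e^{-s_j} - e^{-t_j}|. *)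
Section Espace.
Context {R : realType}.

Definition expm (x : \bar R) : R :=
  match x with EFin r => expR (- r) | +oo%E => 0 | -oo%E => 0 end.

Definition Eset : set (nat -> \bar R) := [set s | forall j, (0 <= s j)%E].

Definition dE (s t : nat -> \bar R) : R :=
  limn (series (fun j => (2 ^- j.+1) * `|expm (s j) - expm (t j)|)).

Definition E_lipschitz (f : (nat -> \bar R) -> R) :=
  exists L : R, forall s t, Eset s -> Eset t -> `|f s - f t| <= L * dE s t.

Definition E_continuous (f : (nat -> \bar R) -> R) :=
  forall s, Eset s -> forall eps : R, 0 < eps -> exists2 delta : R, 0 < delta &
    forall t, Eset t -> dE s t < delta -> `|f s - f t| < eps.

(* chi is a sequence of Lipschitz functions bounded by 1 obtained by
   normalizing a dense sequence of C(E): every continuous f on E is a uniform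
   limit of rescalings c * chi_j. *)
Definition admissible_chi (chi : nat -> (nat -> \bar R) -> R) :=
  (forall j, E_lipschitz (chi j)) /\
  (forall j s, Eset s -> `|chi j s| <= 1) /\
  (forall f, E_continuous f -> forall eps : R, 0 < eps ->
     exists j c, forall s, Eset s -> `|f s - c * chi j s| < eps).

(* D_E(nu o R^-1, nu o R'^-1), with int chi dQ for the image measure Q
   written as int chi o R dnu *)
Definition D_E {d} {X : measurableType d} (chi : nat -> (nat -> \bar R) -> R)
  (nu : set X -> \bar R) (R1 R2 : X -> nat -> \bar R) : \bar R :=
  (\sum_(j <oo) ((2 ^- j.+2 : R)%:E *
     `| \int[nu]_x (chi j (R1 x))%:E - \int[nu]_x (chi j (R2 x))%:E |))%E.

Definition admissible_delay {d} {X : measurableType d}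
  (chi : nat -> (nat -> \bar R) -> R) (T : X -> X)
  (Rl : nat -> X -> nat -> \bar R) (nu : nat -> set X -> \bar R)
  (tau : nat -> X -> nat) :=
  (fun l => D_E chi (nu l) (Rl l) (Rl l \o Tdelay T (tau l))) @ \oo --> 0%E.

End Espace.

(* On the event {tau < phi_A} the orbit of x does not enter A before time tau,
   so T^tau x has the same future visits to A as x: phi_A (T^tau x) + tau =
   phi_A x and T_A (T^tau x) = T_A x.  Hence in b) R_l o T^tau_l = R_l on that
   event, while in a) the two sequences differ only in their first coordinate,
   which moves by at most mu(A_l) tau_l in the metric of E.  As the chi_j are
   bounded by 1 and Lipschitz, every |int chi_j o R_l - int chi_j o R_l o T^tau_l|
   (integrals w.r.t. nu_l) tends to 0, and dominated convergence for the series
   defining D_E concludes.  The functions chi_j o R_l are never shown to be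
   measurable: the integral estimates hold for the lower integral of arbitrary
   functions, by comparing simple functions. *)

From HB Require Import structures.
From mathcomp Require Import all_boot all_order all_algebra.
From mathcomp Require Import all_classical all_reals all_analysis.
From mathcomp Require Import lra measurable_realfun.
Set Implicit Arguments. Unset Strict Implicit. Unset Printing Implicit Defensive.
Import Order.TTheory GRing.Theory Num.Theory.
Import numFieldNormedType.Exports.
Local Open Scope classical_set_scope.
Local Open Scope ring_scope.

Section hitting_times.
Context {R : realType} {X : Type} (T : X -> X) (A : set X).

Definition visits x := exists2 n, (0 < n)%N & A (iter n T x).

Definition avoids (t : nat) x :=
  forall n, (0 < n)%N -> (n <= t)%N -> ~ A (iter n T x).

Lemma hit_timeP x : visits x ->
  [/\ (0 < hit_time T A x)%N, A (iter (hit_time T A x) T x) &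
      forall m, (0 < m)%N -> A (iter m T x) -> (hit_time T A x <= m)%N].
Proof.
move=> [n n0 An]; rewrite /hit_time; set P := (S in xget _ S).
apply: (@xgetPex _ _ P).
have exP : exists n, `[< (0 < n)%N /\ A (iter n T x) >] by exists n; apply/asboolP.
case: (ex_minnP exP) => m /asboolP[m0 Am] minm.
by exists m; split => // k k0 Ak; apply: minm; apply/asboolP.
Qed.

Lemma phi_visits x : visits x -> phi (R:=R) T A x = (hit_time T A x)%:R%:E.
Proof.
move=> vx; have [h0 hA hmin] := hit_timeP vx.
apply/eqP; rewrite eq_le; apply/andP; split.
  by apply: ereal_inf_lbound; exists (hit_time T A x).
by apply: le_ereal_inf_tmp => _ [n [n0 An] <-]; rewrite lee_fin ler_nat hmin.
Qed.

Lemma phi_notvisits x : ~ visits x -> phi (R:=R) T A x = +oo%E.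
Proof.
move=> nvx; rewrite /phi -(@ereal_inf0 R); congr ereal_inf.
by apply/seteqP; split => // y [n [n0 An] _]; apply: nvx; exists n.
Qed.

Lemma phi_ge0 x : (0 <= phi (R:=R) T A x)%E.
Proof.
by have [/phi_visits ->|/phi_notvisits ->] := pselect (visits x).
Qed.

Lemma avoidsP t x : avoids t x <-> (t%:R%:E < phi (R:=R) T A x)%E.
Proof.
have [vx|nvx] := pselect (visits x); last first.
  by rewrite phi_notvisits // ltry; split => // _ n n0 _ An; apply: nvx; exists n.
have [h0 hA hmin] := hit_timeP vx.
rewrite phi_visits // lte_fin ltr_nat; split => [avx|th n n0 nt An].
  by rewrite ltnNge; apply/negP => /(avx _ h0); apply.
by have := hmin n n0 An; rewrite leqNgt (leq_ltn_trans nt th).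
Qed.

Lemma visits_iter t x : avoids t x -> visits (iter t T x) <-> visits x.
Proof.
move=> avx; split => -[n n0 An].
  by exists (n + t)%N; rewrite ?addn_gt0 ?n0 // iterD.
have tn : (t < n)%N by rewrite ltnNge; apply/negP => /(avx _ n0); apply.
by exists (n - t)%N; rewrite ?subn_gt0 // -iterD subnK // ltnW.
Qed.

Lemma hit_time_iter t x : avoids t x -> visits x ->
  (hit_time T A (iter t T x) + t)%N = hit_time T A x.
Proof.
move=> avx vx; have [h0 hA hmin] := hit_timeP vx.
have [k0 kA kmin] := hit_timeP (proj2 (visits_iter avx) vx).
have th : (t < hit_time T A x)%N.
  by rewrite ltnNge; apply/negP => /(avx _ h0); apply.
apply/eqP; rewrite eqn_leq; apply/andP; split; last first.
  by apply: hmin; rewrite ?addn_gt0 ?k0 // iterD.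
rewrite -[X in (_ <= X)%N](subnK (ltnW th)) leq_add2r.
apply: kmin; first by rewrite subn_gt0.
by rewrite -iterD subnK // ltnW.
Qed.

Lemma phi_iter t x : avoids t x ->
  (phi (R:=R) T A (iter t T x) + t%:R%:E)%E = phi (R:=R) T A x.
Proof.
move=> avx; have [vx|nvx] := pselect (visits x).
  rewrite !phi_visits ?(visits_iter avx) //.
  by rewrite -EFinD -natrD hit_time_iter.
by rewrite !phi_notvisits ?(visits_iter avx).
Qed.

Lemma hit_time_notvisits x : ~ visits x -> hit_time T A x = 0%N.
Proof. by move=> nvx; apply: xgetPN => n [n0 An _]; apply: nvx; exists n. Qed.

Lemma iter_TA_notvisits k x : ~ visits x -> iter k (TA T A) x = x.
Proof. by move=> nvx; elim: k => //= k ->; rewrite /TA hit_time_notvisits. Qed.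

Lemma Phi_TA x k : Phi (R:=R) T A (TA T A x) k = Phi T A x k.+1.
Proof. by rewrite /Phi iterSr. Qed.

Lemma Phi_iterS t x k : avoids t x ->
  Phi (R:=R) T A (iter t T x) k.+1 = Phi T A x k.+1.
Proof.
move=> avx; have [vx|nvx] := pselect (visits x).
  by rewrite -!Phi_TA /TA -iterD hit_time_iter.
have nvtx : ~ visits (iter t T x) by rewrite visits_iter.
by rewrite /Phi !iter_TA_notvisits // !phi_notvisits.
Qed.

End hitting_times.

Section measurability.
Context d (X : measurableType d) (T : X -> X) (A : set X).
Hypotheses (mT : measurable_fun setT T) (mA : measurable A).

Lemma measurable_preimage_nat (f : X -> nat) :
  measurable_fun setT f -> forall Q : set nat, measurable (f @^-1` Q).
Proof. by move=> mf Q; rewrite -[_ @^-1` _]setTI; apply: mf. Qed.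

Lemma measurable_fun_iter n : measurable_fun setT (iter n T).
Proof.
elim: n => [|n IH]; first exact: measurable_id.
by rewrite (_ : iter n.+1 T = T \o iter n T) //; apply: measurableT_comp.
Qed.

Lemma measurable_avoids (tau : X -> nat) : measurable_fun setT tau ->
  measurable [set x | avoids T A (tau x) x].
Proof.
move=> mtau.
have -> : [set x | avoids T A (tau x) x] =
    \bigcap_n ~` ([set x | (n < tau x)%N] `&` iter n.+1 T @^-1` A).
  apply/seteqP; split => [x avx n _ [nt An]|x H [//|n] _ nt An].
    exact: (avx n.+1).
  exact: (H n I).
apply: bigcapT_measurable => n; apply/measurableC/measurableI.
  exact: measurable_preimage_nat mtau [set m | (n < m)%N].
by rewrite -[_ @^-1` _]setTI; apply: measurable_fun_iter.
Qed.

End measurability.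

Section sequence_metric.
Context {R : realType}.

Lemma expRN_sub_le (s e : R) : 0 <= s -> 0 <= e ->
  `|expR (- s) - expR (- (s + e))| <= e.
Proof.
move=> s0 e0.
have -> : expR (- (s + e)) = expR (- s) * expR (- e) by rewrite -expRD opprD.
have es1 : expR (- s) <= 1 by rewrite -expR0 ler_expR lerNl oppr0.
have ee1 : expR (- e) <= 1 by rewrite -expR0 ler_expR lerNl oppr0.
have := expR_ge1Dx (- e); have := expR_gt0 (- s).
rewrite ger0_norm; last by rewrite subr_ge0 ler_piMr ?expR_ge0.
by nra.
Qed.

Lemma expm_shift_le (a t : R) (y : \bar R) : 0 <= a -> 0 <= t -> (0 <= y)%E ->
  `|expm (a%:E * (y + t%:E)) - expm (a%:E * y)| <= a * t.
Proof.
move=> a0 t0; case: y => [r||] // r0; last first.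
  by rewrite addye // subrr normr0 mulr_ge0.
rewrite -EFinD -!EFinM /= distrC mulrDr.
by apply: expRN_sub_le; rewrite ?mulr_ge0 // -lee_fin.
Qed.

Lemma dE_eq_head (s t : nat -> \bar R) : (forall j, (0 < j)%N -> s j = t j) ->
  dE s t = 2^-1 * `|expm (s 0%N) - expm (t 0%N)|.
Proof.
move=> st; apply: lim_near_cst => //; exists 1%N => // -[//|n] _.
rewrite /series /= big_nat_recl // big_nat_cond big1 ?addr0 // => j _.
by rewrite st // subrr normr0 mulr0.
Qed.

End sequence_metric.

Lemma dE_Phi_iter_le {R : realType} {X : Type} (T : X -> X) (A : set X)
    (a : R) t x : 0 <= a -> avoids T A t x ->
  0 <= dE (fun k => a%:E * Phi T A x k)%E (fun k => a%:E * Phi T A (iter t T x) k)%E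
    <= a * t%:R.
Proof.
move=> a0 avx; rewrite dE_eq_head => [|[//|k] _]; last by rewrite Phi_iterS.
rewrite mulr_ge0 ?invr_ge0 //= /Phi /= -(phi_iter avx).
apply: le_trans (expm_shift_le a0 (ler0n _ t) (phi_ge0 T A (iter t T x))).
by rewrite ler_piMl // invf_le1 // ler1n.
Qed.

Section excess_nnsfun.
Context d (X : measurableType d) (R : realType).
Import HBSimple HBNNSimple.
Variables (h : {nnsfun X >-> R}) (G : set X) (mG : measurable G) (c : R).

Let S := G `&` h @^-1` `[c, +oo[.

Let mS : measurable S.
Proof. by apply: measurableI => //; apply: measurable_funPTI. Qed.

Let hs : {sfun X >-> R} := h.

Definition excess := (hs \- cst_sfun c) \* @indic_sfun _ _ R _ mS.

HB.instance Definition _ :=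
  SimpleFun.copy excess ((hs \- cst_sfun c) \* @indic_sfun _ _ R _ mS).

Lemma excessE x : excess x = if `[< G x /\ c <= h x >] then h x - c else 0.
Proof.
rewrite /excess /= mindicE.
case: asboolP => [[Gx cx]|nS].
  by rewrite mem_set ?mulr1 //; split => //=; rewrite in_itv /= cx.
case: (boolP (x \in S)); rewrite ?mulr0 // inE => -[Gx] /=.
by rewrite in_itv /= andbT => cx; case: nS.
Qed.

Lemma excess_ge0 x : 0 <= excess x.
Proof. by rewrite excessE; case: asboolP => // -[_]; rewrite subr_ge0. Qed.

HB.instance Definition _ := @isNonNegFun.Build X R excess excess_ge0.

Definition excess_nnsfun : {nnsfun X >-> R} := excess.

End excess_nnsfun.

Section bounded_integrals.
Context d (X : measurableType d) (R : realType) (P : probability X R).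
Local Open Scope ereal_scope.
Import HBNNSimple.

(* No measurability is needed: a simple h below f satisfies
   h <= excess h + c + 1_(~` G), and excess h is a simple function below g. *)
Lemma ge0_integral_le_setC (f g : X -> \bar R) (G : set X) (c : R) :
  measurable G -> (0 <= c)%R -> (forall x, 0 <= f x <= 1) ->
  (forall x, 0 <= g x) -> (forall x, G x -> f x <= g x + c%:E) ->
  \int[P]_x f x <= \int[P]_x g x + c%:E + P (~` G).
Proof.
move=> mG c0 f01 g0 fg.
have f0 x : 0 <= f x by have /andP[] := f01 x.
rewrite (ge0_integralTE _ f0) (ge0_integralTE _ g0).
apply: ge_ereal_sup => _ [h /= hf <-].
pose k := excess_nnsfun h mG c.
have kg x : (k x)%:E <= g x.
  rewrite /k /= excessE; case: asboolP => [[Gx cx]|_]; last exact: g0.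
  by rewrite EFinB leeBlDr // (le_trans (hf x) (fg x Gx)).
have mGC : measurable (~` G) by exact: measurableC.
pose kc1 :=
  add_nnsfun k (add_nnsfun (cst_nnsfun X (NngNum c0)) (indic_nnsfun R mGC)).
have h_le x : (h x <= kc1 x)%R.
  rewrite /kc1 /= mindicE excessE.
  case: asboolP => [[Gx cx]|nS]; first by rewrite memNset //= mulr0n addr0 subrK.
  have [Gx|nGx] := pselect (G x).
    rewrite memNset //= mulr0n !addr0 add0r ltW // ltNge.
    by apply/negP => cx; apply: nS.
  have hx1 : (h x <= 1)%R.
    by rewrite -lee_fin (le_trans (hf x)) //; have /andP[] := f01 x.
  by rewrite mem_set //= mulr1n add0r; lra.
apply: le_trans (le_sintegral P h_le) _.
rewrite !sintegralD sintegral_indic addeA; apply: leeD => //; apply: leeD.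
  by apply: ereal_sup_ubound; exists k.
have := sintegral_EFin_cst P setT (NngNum c0).
by rewrite patch_setT /= probability_setT mule1 => ->.
Qed.

Lemma integral_max0_le (w z : X -> R) (G : set X) (c : R) :
  measurable G -> (0 <= c)%R -> (forall x, `|w x| <= 1)%R ->
  (forall x, G x -> `|w x - z x| <= c)%R ->
  \int[P]_x maxe (w x)%:E 0 <= \int[P]_x maxe (z x)%:E 0 + c%:E + P (~` G).
Proof.
move=> mG c0 w1 wz; apply: ge0_integral_le_setC => // x.
- rewrite le_max lexx orbT /= ge_max lee01 andbT lee_fin.
  by have /ler_normlP[] := w1 x.
- by rewrite le_max lexx orbT.
- move=> Gx; rewrite -!EFin_max -EFinD lee_fin.
  have /ler_normlP[] := wz x Gx; rewrite /Num.max.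
  by case: ifPn => ?; case: ifPn => ?; lra.
Qed.

Lemma integral_max0_01 (w : X -> R) : (forall x, `|w x| <= 1)%R ->
  exists2 r : R, \int[P]_x maxe (w x)%:E 0 = r%:E & (0 <= r <= 1)%R.
Proof.
move=> w1; set I := \int[P]_x _.
have I1 : I <= 1.
  have E0 : \int[P]_x maxe ((fun=> 0%R) x)%:E 0 = 0.
    by rewrite (eq_integral (cst 0)) ?integral0 // => x _; rewrite /= maxxx.
  have := @integral_max0_le w (fun=> 0%R) setT 1 measurableT ler01 w1.
  by rewrite E0 setCT measure0 adde0 add0e; apply => x _; rewrite subr0.
have I0 : 0 <= I by apply: integral_ge0 => x _; rewrite le_max lexx orbT.
have Ifin : I \is a fin_num by rewrite ge0_fin_numE // (le_lt_trans I1) ?ltry.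
by exists (fine I); rewrite ?fineK // -!lee_fin fineK // I0 I1.
Qed.

Lemma integral_dist_le (u v : X -> R) (G : set X) (c : R) :
  measurable G -> (0 <= c)%R ->
  (forall x, `|u x| <= 1)%R -> (forall x, `|v x| <= 1)%R ->
  (forall x, G x -> `|u x - v x| <= c)%R ->
  `|\int[P]_x (u x)%:E - \int[P]_x (v x)%:E| <= 2%:E * (c%:E + P (~` G)).
Proof.
move=> mG c0 u1 v1 uv.
have N1 (w : X -> R) : (forall x, `|w x| <= 1)%R -> forall x, (`|- w x| <= 1)%R.
  by move=> w1 x; rewrite normrN.
have vu x : G x -> (`|v x - u x| <= c)%R by move=> Gx; rewrite distrC uv.
have Nuv x : G x -> (`|- u x - - v x| <= c)%R by move=> Gx; rewrite opprK addrC vu.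
have Nvu x : G x -> (`|- v x - - u x| <= c)%R by move=> Gx; rewrite opprK addrC uv.
have split_integral (w : X -> R) : \int[P]_x (w x)%:E =
    \int[P]_x maxe (w x)%:E 0 - \int[P]_x maxe (- w x)%:E 0.
  by rewrite integralE; congr (_ - _); apply: eq_integral => x _;
    rewrite ?funeposE ?funenegE.
have [p Ep] : exists p : R, P (~` G) = p%:E.
  exists (fine (P (~` G))); rewrite fineK // ge0_fin_numE //.
  by rewrite (le_lt_trans (probability_le1 _ _)) ?ltry //; apply: measurableC.
have := integral_max0_le mG c0 u1 uv; have := integral_max0_le mG c0 v1 vu.
have := integral_max0_le mG c0 (N1 _ u1) Nuv.
have := integral_max0_le mG c0 (N1 _ v1) Nvu.
rewrite !split_integral Ep.
have [a -> ?] := integral_max0_01 u1; have [b -> ?] := integral_max0_01 v1.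
have [a' /= -> ?] := integral_max0_01 (N1 _ u1).
have [b' /= -> ?] := integral_max0_01 (N1 _ v1).
rewrite -!EFinD !lee_fin => *.
by apply/ler_normlP; split; lra.
Qed.

End bounded_integrals.

Section sequences.
Context {R : realType}.
Local Open Scope ereal_scope.

Lemma cvge0_nngP {T : Type} {F : set_system T} {FF : Filter F} (u : T -> \bar R) :
  (forall t, 0 <= u t) ->
  u @ F --> 0 <-> forall e : R, (0 < e)%R -> \forall t \near F, u t <= e%:E.
Proof.
move=> u0; split => [/fine_cvgP[ufin /cvgrPdist_le uF] e e0|ue].
  apply: filterS2 ufin (uF e e0) => t /fineK <-.
  by rewrite sub0r normrN lee_fin => /(le_trans (ler_norm _)).
apply/fine_cvgP; split.
  apply: filterS (ue 1%R ltr01) => t ut.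
  by rewrite ge0_fin_numE // (le_lt_trans ut) ?ltry.
apply/cvgrPdist_le => e e0; apply: filterS (ue e e0) => t ut.
have ufin : u t \is a fin_num by rewrite ge0_fin_numE // (le_lt_trans ut) ?ltry.
by rewrite sub0r normrN ger0_norm /= ?fine_ge0 // -lee_fin fineK.
Qed.

Lemma nneseries_dominated_cvg0 (u : nat -> nat -> \bar R) (b : nat -> \bar R) :
  (forall l j, 0 <= u l j <= b j) -> \sum_(j <oo) b j < +oo ->
  (forall j, u^~ j @ \oo --> 0) -> \sum_(j <oo) u l j @[l --> \oo] --> 0.
Proof.
move=> ub bfin u0.
have u_ge0 l j : 0 <= u l j by have /andP[] := ub l j.
have b_ge0 j : 0 <= b j by have /andP[/le_trans] := ub 0%N j; apply.
have u_le_b j l : [set: nat] j -> `|u l j| <= b j.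
  by rewrite gee0_abs //; have /andP[] := ub l j.
have ib : counting.-integrable [set: nat] b.
  apply/integrableP; split => //.
  by rewrite (eq_integral b) ?ge0_integral_count // => j _; rewrite gee0_abs.
have meas_u l : measurable_fun [set: nat] (u l) by [].
have [_ _] := dominated_convergence measurableT meas_u (measurable_cst (0 : \bar R))
  (aeW _ (fun j _ => u0 j)) ib (aeW _ u_le_b).
by rewrite integral0; under eq_fun do rewrite ge0_integral_count //.
Qed.

End sequences.

Lemma integral_dist_cvg0 d (X : measurableType d) (R : realType)
    (P : nat -> probability X R) (u v : nat -> X -> R) :
  (forall l x, `|u l x| <= 1) -> (forall l x, `|v l x| <= 1) ->
  (forall e : R, 0 < e -> exists2 G : nat -> set X, forall l, measurable (G l) &
     P l (~` G l) @[l --> \oo] --> 0%E /\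
     forall l x, G l x -> `|u l x - v l x| <= e) ->
  `|\int[P l]_x (u l x)%:E - \int[P l]_x (v l x)%:E|%E @[l --> \oo] --> 0%E.
Proof.
move=> u1 v1 uv_small; apply/cvge0_nngP => [l|e e0]; first exact: abse_ge0.
have e4 : 0 < e / 4 by rewrite divr_gt0.
have [G mG [/cvge0_nngP PG0 uvG]] := uv_small _ e4.
apply: filterS (PG0 (fun l => measure_ge0 _ _) _ e4) => l PGl.
apply: le_trans (integral_dist_le (P l) (mG l) (ltW e4) (u1 l) (v1 l) (uvG l)) _.
have PGfin : P l (~` G l) \is a fin_num.
  by rewrite ge0_fin_numE // (le_lt_trans PGl) ?ltry.
move: PGl; rewrite -(fineK PGfin) -EFinD -EFinM !lee_fin; lra.
Qed.

Lemma D_E_cvg0 d (X : measurableType d) (R : realType)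
    (chi : nat -> (nat -> \bar R) -> R) (nu : nat -> probability X R)
    (R1 R2 : nat -> X -> nat -> \bar R) :
  (forall j s, Eset s -> `|chi j s| <= 1) ->
  (forall l x, Eset (R1 l x)) -> (forall l x, Eset (R2 l x)) ->
  (forall j, `|\int[nu l]_x (chi j (R1 l x))%:E -
               \int[nu l]_x (chi j (R2 l x))%:E|%E @[l --> \oo] --> 0%E) ->
  D_E chi (nu l) (R1 l) (R2 l) @[l --> \oo] --> 0%E.
Proof.
move=> chi1 ER1 ER2 termwise.
pose b j := (4 / (2 ^ (j + 2))%:R)%:E : \bar R.
apply: (@nneseries_dominated_cvg0 _ _ b) => [l j||j].
- have chi_dist2 x : [set: X] x -> `|chi j (R1 l x) - chi j (R2 l x)| <= 2%:R.
    move=> _; apply: le_trans (ler_normB _ _) _.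
    by rewrite (natrD _ 1 1) lerD ?chi1.
  have := integral_dist_le (nu l) measurableT (ler0n _ 2)
    (fun x => chi1 j _ (ER1 l x)) (fun x => chi1 j _ (ER2 l x)) chi_dist2.
  rewrite setCT measure0 adde0 -EFinM => dist4.
  rewrite mule_ge0 ?lee_fin ?invr_ge0 ?exprn_ge0 //=.
  apply: le_trans (lee_wpmul2l _ dist4) _.
    by rewrite lee_fin invr_ge0 exprn_ge0.
  by rewrite -EFinM lee_fin natrX addn2; lra.
- by rewrite (cvg_lim _ (@cvg_geometric_eseries_half _ 4 1)) ?ltry.
- by rewrite -[0%E](mule0 (2^- j.+2)%:E); apply: cvgeZl.
Qed.

Section admissible_delays.
Context d (X : measurableType d) (R : realType) (mu : probability X R)
  (T : X -> X) (A : nat -> set X) (nu : nat -> probability X R)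
  (tau : nat -> X -> nat) (chi : nat -> (nat -> \bar R) -> R).
Hypotheses (mT : measurable_fun setT T) (mA : forall l, measurable (A l))
  (mtau : forall l, measurable_fun setT (tau l))
  (chi1 : forall j s, Eset s -> `|chi j s| <= 1).
Hypothesis no_early_visit :
  (fun l => nu l [set x | (((tau l x)%:R : R)%:E < phi T (A l) x)%E]) @ \oo --> 1%E.

Let G l := [set x | avoids T (A l) (tau l x) x].

Let mG l : measurable (G l).
Proof. exact: measurable_avoids. Qed.

Let nu_setCG_cvg0 : nu l (~` G l) @[l --> \oo] --> 0%E.
Proof.
have GE l : G l = [set x | (((tau l x)%:R : R)%:E < phi T (A l) x)%E].
  by apply/funext => x; apply/propext/avoidsP.
under eq_fun do rewrite probability_setC // GE.
by rewrite -(@subee _ 1) //; apply: cvgeB => //; apply: cvg_cst.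
Qed.

Let muA_fin l : mu (A l) = (fine (mu (A l)))%:E.
Proof.
by rewrite fineK // ge0_fin_numE // (le_lt_trans (probability_le1 _ _)) ?ltry.
Qed.

Let Eset_scaled_Phi l x : Eset (fun k => mu (A l) * Phi T (A l) x k)%E.
Proof. by move=> k; rewrite mule_ge0 ?phi_ge0. Qed.

Let scaled_Phi_dist_le j (L : R) l x :
  (forall s t, Eset s -> Eset t -> `|chi j s - chi j t| <= L * dE s t) ->
  G l x ->
  `|chi j (fun k => mu (A l) * Phi T (A l) x k)%E -
    chi j (fun k => mu (A l) * Phi T (A l) (Tdelay T (tau l) x) k)%E|
    <= `|L| * (fine (mu (A l)) * (tau l x)%:R).
Proof.
move=> chiLj Gx; have a0 : 0 <= fine (mu (A l)) by rewrite fine_ge0.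
have /andP[dE_ge0 dE_le] := dE_Phi_iter_le a0 Gx.
rewrite -muA_fin in dE_ge0 dE_le.
apply: le_trans (chiLj _ _ (Eset_scaled_Phi l x) (Eset_scaled_Phi l _)) _.
apply: le_trans (ler_wpM2r dE_ge0 (ler_norm L)) _.
exact: ler_wpM2l.
Qed.

Lemma admissible_delay_Phi_TA :
  admissible_delay chi T
    (fun l x k => mu (A l) * Phi T (A l) (TA T (A l) x) k)%E nu tau.
Proof.
apply: D_E_cvg0 => // [l x|j]; first exact: Eset_scaled_Phi.
apply: (integral_dist_cvg0 (u := fun l x => chi j _) (v := fun l x => chi j _))
  => [l x|l x|e e0]; try exact/chi1/Eset_scaled_Phi.
exists G => //; split => // l x Gx /=.
have -> : (fun k => mu (A l) * Phi T (A l) (TA T (A l) (Tdelay T (tau l) x)) k)%E =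
          (fun k => mu (A l) * Phi T (A l) (TA T (A l) x) k)%E.
  by apply/funext => k; rewrite !Phi_TA Phi_iterS.
by rewrite subrr normr0 ltW.
Qed.

Lemma admissible_delay_Phi : (forall j, E_lipschitz (chi j)) ->
  (forall eps : R, 0 < eps ->
    nu l [set x | (eps%:E < mu (A l) * ((tau l x)%:R)%:E)%E] @[l --> \oo] --> 0%E) ->
  admissible_delay chi T (fun l x k => mu (A l) * Phi T (A l) x k)%E nu tau.
Proof.
move=> chiL tau_small; apply: D_E_cvg0 => // [l x|j]; first exact: Eset_scaled_Phi.
apply: (integral_dist_cvg0 (u := fun l x => chi j _) (v := fun l x => chi j _))
  => [l x|l x|e e0]; try exact/chi1/Eset_scaled_Phi.
have [L chiLj] := chiL j.
pose eps := e / (`|L| + 1).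
have eps0 : 0 < eps by rewrite divr_gt0 // ltr_pwDr.
pose B l := [set x | (eps%:E < mu (A l) * ((tau l x)%:R)%:E)%E].
have mB l : measurable (B l).
  exact: measurable_preimage_nat (mtau l) [set m | (eps%:E < mu (A l) * m%:R%:E)%E].
exists (fun l => G l `&` ~` B l) => [l|]; first exact/measurableI/measurableC.
split.
  apply: (@squeeze_cvge _ _ _ _ (cst 0%E) _ (fun l => nu l (~` G l) + nu l (B l))%E).
  - apply: nearW => l; rewrite measure_ge0 /= setCI setCK.
    by apply: measureU2 => //; apply: measurableC.
  - exact: cvg_cst.
  - by rewrite -(adde0 0%E); apply: cvgeD => //; apply: tau_small.
move=> l x [Gx nBx] /=.
apply: le_trans (scaled_Phi_dist_le chiLj Gx) _.
have a_tau : fine (mu (A l)) * (tau l x)%:R <= eps.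
  rewrite leNgt; apply/negP => ?; apply: nBx.
  by rewrite /B /= muA_fin -EFinM lte_fin.
apply: le_trans (ler_wpM2l (normr_ge0 L) a_tau) _.
by rewrite /eps mulrA ler_pdivrMr ?ltr_pwDr // mulrDr mulr1 mulrC lerDl ltW.
Qed.

End admissible_delays.

Theorem mainTheorem14 (d : measure_display) (X : measurableType d)
  (R : realType) (mu : probability X R) (T : X -> X)
  (A : nat -> set X) (nu : nat -> probability X R) (tau : nat -> X -> nat)
  (chi : nat -> (nat -> \bar R) -> R) :
  measure_preserving mu T ->
  asymptotically_rare mu A ->
  (forall l, nu l `<< mu) ->
  (forall l, measurable_fun setT (tau l)) ->
  admissible_chi chi ->
  (* a) *)
  ((forall eps : R, 0 < eps ->
      (fun l => nu l [set x | (eps%:E < mu (A l) * ((tau l x)%:R)%:E)%E])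
        @ \oo --> 0%E) ->
   (fun l => nu l [set x | (((tau l x)%:R : R)%:E < phi T (A l) x)%E]) @ \oo --> 1%E ->
   admissible_delay chi T
     (fun l x => fun k => (mu (A l) * Phi T (A l) x k)%E) nu tau)
  /\
  (* b) *)
  ((fun l => nu l [set x | (((tau l x)%:R : R)%:E < phi T (A l) x)%E]) @ \oo --> 1%E ->
   admissible_delay chi T
     (fun l x => fun k => (mu (A l) * Phi T (A l) (TA T (A l) x) k)%E) nu tau).
Proof.
move=> [mT _] [mA _] _ mtau [chiL [chi1 _]].
split => [tau_small|] no_early_visit.
  exact: admissible_delay_Phi.
exact: admissible_delay_Phi_TA.
Qed.
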